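(* Let $\vec k=(k_1,\dots,k_\ell)$ be a vector of positive integers and $\pi\in\mathcal D_{\vec k}$. Let $(t_1,\dots,t_\ell)$ be the first-row entries of $F=\eta_*(\pi)$. For each $2\le j\le\ell$, let $i$ be the index of the column of $F$ containing the entry $t_j-1$ and let $m_{ij}$ be the row index of $t_j-1$ in $F$. Then the area sequence $(a_1,\dots,a_\ell)$ of $\pi$ satisfies $a_1=0$ and $a_j=a_i+k_i-m_{ij}+1$ for $j\ge2$, and the depth labeling sequence $(d_1,\dots,d_\ell)$ of $\pi$ satisfies $d_1=0$ and $d_j=d_i+m_{ij}-1$ for $j\ge 2$.
   Context: $|\vec k|=k_1+\cdots+k_\ell$, $N=|\vec k|+\ell$. A $\vec k$-Dyck path is a word $\pi=\pi_1\cdots\pi_N$ containing the letters $S^{k_1},\dots,S^{k_\ell}$ exactly once each and in this order, together with $|\vec k|$ letters $W$, such that all starting ranks are nonnegative, where $r_1=0$, $r_{i+1}=r_i+k_j$ if $\pi_i=S^{k_j}$ and $r_{i+1}=r_i-1$ if $\pi_i=W$. $\mathcal D_{\vec k}$ is the set of such paths. The area sequence is $(a_1,\dots,a_\ell)$ where $a_j$ is the starting rank of the letter $S^{k_j}$. Filling algorithm $\eta_*$: in a tableau of $\ell$ top-justified columns, column $i$ having $k_i+1$ cells, place $1$ at the top of column 1; for $i=2,\dots,N$, call an entry active if it is currently the bottom entry of a column $i'$ not yet containing $k_{i'}+1$ entries; if $\pi_i=W$ place $i$ immediately below the largest active entry, otherwise place $i$ at the top of the first empty column. Ranking algorithm $\gamma_*$: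 column 1 of a tableau of the same shape gets ranks $0,1,\dots,k_1$ top to bottom; for $i\ge2$, if the top entry of column $i$ of $\eta_*(\pi)$ is $A+1$ and $A$ has rank $\alpha$, column $i$ gets ranks $\alpha,\alpha+1,\dots,\alpha+k_i$ top to bottom. The depth labeling sequence $(d_1,\dots,d_\ell)$ is the first row of the ranking tableau $\gamma_*(\eta_*(\pi))$. Rows are numbered from $1$ starting at the top. *)

From mathcomp Require Import all_boot all_order all_algebra.
Set Implicit Arguments. Unset Strict Implicit. Unset Printing Implicit Defensive.
Import GRing.Theory Num.Theory.

(* Conventions: the composition vector k = (k_1,...,k_l) is [k : seq nat],
   indices are 0-based (column/letter j here = j+1 in the paper).
   A letter is [option nat]: [Some j] is S^{k_{j+1}}, [None] is W. *)

Definition letter := option nat.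

Definition step_val (k : seq nat) (x : letter) : int :=
  if x is Some j then (nth 0 k j)%:Z else (-1)%R.

(* starting rank of the letter at (0-based) position i: r_{i+1} in the paper *)
Definition srank (k : seq nat) (pi : seq letter) (i : nat) : int :=
  (\sum_(x <- take i pi) step_val k x)%R.

Definition is_dyck (k : seq nat) (pi : seq letter) : Prop :=
  [/\ pmap id pi = iota 0 (size k),            (* S^{k_1},...,S^{k_l} once each, in order *)
      count (fun x => x == None) pi = sumn k
    & forall i, i < size pi -> (0 <= srank k pi i)%R].

Definition area (k : seq nat) (pi : seq letter) (j : nat) : int :=
  srank k pi (index (Some j) pi).

(* Tableaux: a list of columns, each column listed top to bottom. *)
Definition tableau := seq (seq nat).

Definition column (F : tableau) (c : nat) : seq nat := nth [::] F c.

Definition is_active (k : seq nat) (F : tableau) (c : nat) : bool :=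
  (0 < size (column F c)) && (size (column F c) < (nth 0 k c).+1).

Definition bottom (F : tableau) (c : nat) : nat := last 0 (column F c).

Definition largest_active (k : seq nat) (F : tableau) : option nat :=
  foldl (fun b c =>
           if is_active k F c &&
              (if b is Some b' then bottom F b' < bottom F c else true)
           then Some c else b) None (iota 0 (size k)).

Definition fill_step (k : seq nat) (F : tableau) (i : nat) (x : letter) : tableau :=
  if x is None then
    (if largest_active k F is Some c then set_nth [::] F c (rcons (column F c) i)
     else F)
  else
    let c := find (fun cl => size cl == 0) F in set_nth [::] F c [:: i].

Definition eta (k : seq nat) (pi : seq letter) : tableau :=
  foldl (fun F p => fill_step k F p.1 p.2)
        (set_nth [::] (nseq (size k) [::]) 0 [:: 1])
        (zip (iota 2 (size pi).-1) (behead pi)).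

Definition gamma (k : seq nat) (F : tableau) : tableau :=
  foldl (fun R i =>
           let A := (head 0 (column F i)).-1 in
           let c := find (fun cl => A \in cl) F in
           let alpha := nth 0 (column R c) (index A (column F c)) in
           rcons R (iota alpha (nth 0 k i).+1))
        [:: iota 0 (nth 0 k 0).+1] (iota 1 (size k).-1).

Definition depth (k : seq nat) (pi : seq letter) (j : nat) : nat :=
  head 0 (column (gamma k (eta k pi)) j).

(* Let r(x) be the rank of pi after its first x letters and T_c the position of
   S^{k_c}, so that r(T_c) = a_c.  Filling pi letter by letter, column c is opened
   by the entry T_c + 1 and afterwards receives only W-steps, so its entry x in row
   q (counted from 0) satisfies r(x) + q = a_c + k_c: a column records the descent
   of the path from the top of its own S-step.  This stays true because the free
   cells of the active columns, stacked in column order, account exactly for the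
   current rank, and a W-step always goes to the active column of largest index
   (the bottoms of active columns increase with the index).  Since t_j - 1 = T_j,
   the area recursion is this identity for the entry t_j - 1; the depth recursion
   is the defining step of gamma_*, once one knows that the column holding t_j - 1
   precedes column j. *)

From mathcomp Require Import all_boot all_order all_algebra zify.
Import GRing.Theory Num.Theory.
Set Implicit Arguments. Unset Strict Implicit. Unset Printing Implicit Defensive.

Lemma find_first (T : Type) (x0 : T) (p : pred T) (s : seq T) i :
  i < size s -> p (nth x0 s i) -> (forall j, j < i -> ~~ p (nth x0 s j)) ->
  find p s = i.
Proof.
elim: s i => [//|y s IH] [|i] /= hi hp hb; first by rewrite hp.
by rewrite (negbTE (hb 0 isT)) (IH i) // => j /(hb j.+1).
Qed.

Lemma big_nat_split_at (F : nat -> nat) c l : c < l ->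
  \sum_(0 <= i < l) F i = \sum_(0 <= i < c) F i + F c + \sum_(c.+1 <= i < l) F i.
Proof.
by move=> hc; rewrite (@big_cat_nat _ _ _ c) ?(ltnW hc) // (@big_ltn _ _ _ c l) //= addnA.
Qed.

Lemma big_nat_eq0 (F : nat -> nat) m l :
  (forall i, m <= i < l -> F i = 0) -> \sum_(m <= i < l) F i = 0.
Proof. by move=> h; rewrite big_nat_cond big1 // => i /andP[/h]. Qed.

Lemma srankS k pi n : n < size pi ->
  srank k pi n.+1 = (srank k pi n + step_val k (nth None pi n))%R.
Proof. by move=> hn; rewrite /srank (take_nth None hn) -cats1 big_cat /= big_seq1. Qed.

Lemma sum_step_val k (s : seq letter) :
  (\sum_(x <- s) step_val k x)%R =
  ((\sum_(c <- pmap id s) nth 0 k c)%N%:Z - (count (fun x => x == None) s)%:Z)%R.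
Proof.
elim: s => [|x s IH]; first by rewrite !big_nil.
by rewrite big_cons IH; case: x => [c|] /=; rewrite ?big_cons /=; lia.
Qed.

Lemma srank_size k pi : is_dyck k pi -> srank k pi (size pi) = 0%R.
Proof.
case=> labels nW _; rewrite /srank take_size sum_step_val labels nW.
suff -> : \sum_(c <- iota 0 (size k)) nth 0 k c = sumn k by rewrite subrr.
by rewrite sumnE [RHS](big_nth 0) /index_iota subn0.
Qed.

Lemma srank_ge0 k pi n : is_dyck k pi -> n <= size pi -> (0 <= srank k pi n)%R.
Proof.
move=> dyck; rewrite leq_eqVlt => /predU1P[->|]; first by rewrite srank_size.
by case: dyck => _ _; apply.
Qed.

Section Labels.

Variables (pi : seq letter) (l : nat).
Hypothesis pi_labels : pmap id pi = iota 0 l.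

Lemma pmap_take n : pmap id (take n pi) = iota 0 (size (pmap id (take n pi))).
Proof.
have e := pi_labels; rewrite -(cat_take_drop n pi) pmap_cat in e.
have sz : size (pmap id (take n pi)) <= l by rewrite -(size_iota 0 l) -e size_cat leq_addr.
by rewrite -(minn_idPl sz) -take_iota -e take_size_cat.
Qed.

Lemma mem_Some_take n c : (Some c \in take n pi) = (c < size (pmap id (take n pi))).
Proof.
rewrite -[c < _](mem_iota 0) -pmap_take mem_pmap.
by apply/idP/mapP => [hc|[[x|] hx // [->]]]; first exists (Some c).
Qed.

Lemma mem_Some c : (Some c \in pi) = (c < l).
Proof. by have := mem_Some_take (size pi) c; rewrite take_size pi_labels size_iota. Qed.

Lemma nth_SomeE n c : nth None pi n = Some c -> n < size pi ->
  c = size (pmap id (take n pi)).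
Proof.
move=> hc hn; have := pmap_take n.+1.
rewrite (take_nth None hn) hc -cats1 pmap_cat /= size_cat /= addn1 {1}pmap_take.
by rewrite -addn1 iotaD add0n /= !cats1 => /rcons_inj[].
Qed.

Lemma index_Some_nth n c : nth None pi n = Some c -> n < size pi -> index (Some c) pi = n.
Proof.
move=> hc hn; have e := nth_SomeE hc hn.
have nin : Some c \notin take n pi by rewrite mem_Some_take -e ltnn.
rewrite -(cat_take_drop n pi) index_cat (negbTE nin) (drop_nth None hn) hc /=.
by rewrite eqxx addn0 size_take hn.
Qed.

Lemma index_Some_lt c c' : c < c' -> c' < l -> index (Some c) pi < index (Some c') pi.
Proof.
move=> lt hl.
have hin : Some c' \in pi by rewrite mem_Some.
have hn : index (Some c') pi < size pi by rewrite index_mem.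
rewrite -in_take_leq ?(ltnW hn) // mem_Some_take.
by rewrite -(nth_SomeE (nth_index None hin) hn).
Qed.

Lemma index_Some_le c c' : c <= c' -> c' < l -> index (Some c) pi <= index (Some c') pi.
Proof.
by rewrite leq_eqVlt => /predU1P[->//|lt] hl; rewrite ltnW // index_Some_lt.
Qed.

End Labels.

Definition place (F : tableau) (c x : nat) : tableau :=
  set_nth [::] F c (rcons (column F c) x).

Definition free_cells (k : seq nat) (F : tableau) (c : nat) : nat :=
  if size (column F c) == 0 then 0 else (nth 0 k c).+1 - size (column F c).

Lemma column_place F c x c' :
  column (place F c x) c' = if c' == c then rcons (column F c) x else column F c'.
Proof. by rewrite /column nth_set_nth. Qed.

Lemma size_column_gt0 (F : tableau) c : 0 < size (column F c) -> c < size F.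
Proof. by rewrite /column; case: (ltnP c (size F)) => // hc; rewrite nth_default. Qed.

Lemma nth_place F c x c' q : q < size (column (place F c x) c') ->
  (q < size (column F c') /\ nth 0 (column (place F c x) c') q = nth 0 (column F c') q) \/
  [/\ c' = c, q = size (column F c) & nth 0 (column (place F c x) c') q = x].
Proof.
rewrite column_place; case: eqP => [->|_]; last by left.
rewrite size_rcons ltnS leq_eqVlt nth_rcons => /predU1P[->|->]; last by left.
by right; rewrite ltnn eqxx.
Qed.

Lemma free_cells_place_neq k F c x i : i != c ->
  free_cells k (place F c x) i = free_cells k F i.
Proof. by move=> /negbTE h; rewrite /free_cells column_place h. Qed.

Lemma free_cells_inactive k F c : ~~ is_active k F c -> free_cells k F c = 0.
Proof.
rewrite /free_cells /is_active lt0n; case: eqP => //= _.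
by rewrite -leqNgt -subn_eq0 => /eqP.
Qed.

Lemma sum_free_cells_place k F c x l : c < l ->
  \sum_(0 <= i < l) free_cells k (place F c x) i + free_cells k F c =
  \sum_(0 <= i < l) free_cells k F i + free_cells k (place F c x) c.
Proof.
move=> hc; rewrite !(big_nat_split_at _ hc).
have eq_out m p : c \notin index_iota m p ->
    \sum_(m <= i < p) free_cells k (place F c x) i = \sum_(m <= i < p) free_cells k F i.
  move=> hout; apply: eq_big_seq => i hi; apply: free_cells_place_neq.
  by apply: contraNneq hout => <-.
rewrite !eq_out ?mem_index_iota ?ltnn ?andbF //; lia.
Qed.

Lemma bottom_place F c x c' : bottom (place F c x) c' = if c' == c then x else bottom F c'.
Proof. by rewrite /bottom column_place; case: eqP => // _; rewrite last_rcons. Qed.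

Lemma largest_activeP k F :
  (forall c c', c < c' -> is_active k F c -> is_active k F c' -> bottom F c < bottom F c') ->
  match largest_active k F with
  | None => forall c, c < size k -> ~~ is_active k F c
  | Some b => [/\ b < size k, is_active k F b &
                 forall c, c < size k -> is_active k F c -> c <= b]
  end.
Proof.
rewrite /largest_active => bottom_lt; elim: (size k) => [//|m IH].
rewrite -addn1 iotaD cats1 foldl_rcons add0n addn1.
case: foldl IH => [b [hb ab bmax]|none_active] /=.
  case am: (is_active k F m); rewrite /= ?(bottom_lt _ _ hb ab am) /=.
    by split=> // c; rewrite ltnS.
  split=> [||c]; [exact: ltnW | by [] | rewrite ltnS leq_eqVlt].
  by case/predU1P=> [->|/bmax //]; rewrite am.
case am: (is_active k F m) => /=; first by split=> // c; rewrite ltnS.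
by move=> c; rewrite ltnS leq_eqVlt => /predU1P[->|/none_active]; rewrite ?am.
Qed.

Record filling_inv (k : seq nat) (pi : seq letter) (n : nat) (F : tableau) : Prop := {
  inv_size : size F = size k;
  inv_empty : forall c, c < size k ->
    (size (column F c) == 0) = (n <= index (Some c) pi);
  inv_cap : forall c, size (column F c) <= (nth 0 k c).+1;
  inv_entry : forall c q, q < size (column F c) ->
    let x := nth 0 (column F c) q in
    [/\ 0 < x <= n, index (Some c) pi < x, q = 0 -> x = (index (Some c) pi).+1
      & (srank k pi x + q%:Z = area k pi c + (nth 0%N k c)%:Z)%R];
  inv_cover : forall x, 0 < x <= n ->
    exists c q, q < size (column F c) /\ nth 0 (column F c) q = x;
  inv_uniq : forall c q c' q', q < size (column F c) -> q' < size (column F c') ->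
    nth 0 (column F c) q = nth 0 (column F c') q' -> c = c' /\ q = q';
  inv_bottom_lt : forall c c', c < c' -> is_active k F c -> is_active k F c' ->
    bottom F c < bottom F c';
  inv_area_active : forall c, is_active k F c ->
    area k pi c = Posz (\sum_(0 <= i < c) free_cells k F i);
  inv_srank : srank k pi n = Posz (\sum_(0 <= i < size k) free_cells k F i) }.

Section FillingInvariant.

Variables (k : seq nat) (pi : seq letter) (n : nat) (F : tableau).
Hypothesis inv : filling_inv k pi n F.

Lemma inv_column_lt c : 0 < size (column F c) -> c < size k.
Proof. by rewrite -(inv_size inv); apply: size_column_gt0. Qed.

Lemma inv_started c : c < size k ->
  (0 < size (column F c)) = (index (Some c) pi < n).
Proof. by move=> hc; rewrite lt0n (inv_empty inv hc) -ltnNge. Qed.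

Lemma inv_bottom_le c : 0 < size (column F c) -> bottom F c <= n.
Proof.
rewrite /bottom (last_nth 0); case e: (column F c) => [//|y s] _ /=.
have := inv_entry inv (c := c) (q := size s); rewrite e /= ltnSn.
by move=> /(_ isT) [/andP[_ +] _ _ _]; case: (s).
Qed.

Lemma inv_find_column c q : q < size (column F c) ->
  let x := nth 0 (column F c) q in
  find (fun cl => x \in cl) F = c /\ index x (column F c) = q.
Proof.
move=> hq x; have hin : x \in column F c by rewrite mem_nth.
have same c' : x \in column F c' -> c' = c /\ index x (column F c') = q.
  move=> hin'; have hi : index x (column F c') < size (column F c') by rewrite index_mem.
  by have := inv_uniq inv hi hq; rewrite nth_index // => /(_ erefl) [-> ->].
split; last by have [_] := same c hin.
apply: (@find_first _ [::] (fun cl : seq nat => x \in cl)) => //.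
  by rewrite (inv_size inv) (inv_column_lt (leq_ltn_trans _ hq)).
by move=> j hj; apply/negP => /same [ej _]; rewrite ej ltnn in hj.
Qed.

End FillingInvariant.

Section Place.

Variables (k : seq nat) (pi : seq letter) (n c : nat) (F : tableau).
Hypotheses (pi_labels : pmap id pi = iota 0 (size k)) (inv : filling_inv k pi n F).
Hypotheses (n_lt : n < size pi) (c_lt : c < size k).
Hypothesis c_room : size (column F c) <= nth 0 k c.
Hypothesis c_last : forall c', c < c' -> ~~ is_active k F c'.
Hypothesis letter_n : nth None pi n = if size (column F c) == 0 then Some c else None.

Lemma place_index_empty : size (column F c) = 0 -> index (Some c) pi = n.
Proof. by move=> e; apply: (index_Some_nth pi_labels); rewrite ?letter_n ?e. Qed.

Lemma place_index_le : index (Some c) pi <= n.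
Proof.
case: (posnP (size (column F c))) => [/place_index_empty -> //|ne].
by rewrite ltnW // -(inv_started inv c_lt).
Qed.

Lemma place_srank_n :
  srank k pi n = Posz (\sum_(0 <= i < c) free_cells k F i + free_cells k F c).
Proof.
rewrite (inv_srank inv) (big_nat_split_at _ c_lt) (@big_nat_eq0 _ c.+1) ?addn0 //.
move=> i /andP[hi _].
exact/free_cells_inactive/c_last.
Qed.

Lemma place_area : area k pi c = Posz (\sum_(0 <= i < c) free_cells k F i).
Proof.
have [/(inv_area_active inv) //|inactive] := boolP (is_active k F c).
have e : size (column F c) = 0.
  by move: inactive; rewrite /is_active ltnS c_room andbT lt0n negbK => /eqP.
by rewrite /area place_index_empty // place_srank_n free_cells_inactive ?addn0.
Qed.

Lemma place_step_val : step_val k (nth None pi n) =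
  (if size (column F c) == 0 then (nth 0%N k c)%:Z else -1)%R.
Proof. by rewrite letter_n; case: eqP. Qed.

Lemma place_srank :
  (srank k pi n.+1 + (size (column F c))%:Z = area k pi c + (nth 0%N k c)%:Z)%R.
Proof.
rewrite srankS // place_step_val place_srank_n place_area.
set S := \sum_(0 <= i < c) _; rewrite /free_cells.
move: c_room; case: eqP => [->|_] room; lia.
Qed.

Lemma place_free_cells : Posz (free_cells k (place F c n.+1) c) =
  (Posz (free_cells k F c) + step_val k (nth None pi n))%R.
Proof.
rewrite place_step_val /free_cells column_place eqxx size_rcons /=.
by move: c_room; case: eqP => [->|_] room; lia.
Qed.

Lemma place_empty c' : c' < size k ->
  (size (column (place F c n.+1) c') == 0) = (n.+1 <= index (Some c') pi).
Proof.
move=> hc'; rewrite column_place; case: (eqVneq c' c) => [->|nc].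
  by rewrite size_rcons ltnNge place_index_le.
rewrite (inv_empty inv hc') [in LHS]leq_eqVlt.
have : nth None pi (index (Some c') pi) = Some c' by rewrite nth_index ?(mem_Some pi_labels).
case: eqP => //= <-.
by rewrite letter_n; case: eqP => // _ [e]; rewrite e eqxx in nc.
Qed.

Lemma place_entry c' q : q < size (column (place F c n.+1) c') ->
  let x := nth 0 (column (place F c n.+1) c') q in
  [/\ 0 < x <= n.+1, index (Some c') pi < x, q = 0 -> x = (index (Some c') pi).+1
    & (srank k pi x + q%:Z = area k pi c' + (nth 0%N k c')%:Z)%R].
Proof.
case/nth_place => [[hq ->]|[-> -> ->]]; last first.
  split; [by rewrite leqnn | by rewrite ltnS place_index_le |
          by move/place_index_empty-> | exact: place_srank].
have [/andP[x0 xn] ? ? ?] := inv_entry inv hq.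
by split=> //; rewrite x0 ltnW.
Qed.

Lemma place_uniq c1 q1 c2 q2 :
  q1 < size (column (place F c n.+1) c1) -> q2 < size (column (place F c n.+1) c2) ->
  nth 0 (column (place F c n.+1) c1) q1 = nth 0 (column (place F c n.+1) c2) q2 ->
  c1 = c2 /\ q1 = q2.
Proof.
have old_le c' q : q < size (column F c') -> nth 0 (column F c') q < n.+1.
  by move=> hq; have [/andP[_ +] _ _ _] := inv_entry inv hq.
case/nth_place => [[hq1 ->]|[-> -> ->]]; case/nth_place => [[hq2 ->]|[-> -> ->]] //.
- exact: (inv_uniq inv hq1 hq2).
- by move=> e; have := old_le _ _ hq1; rewrite e ltnn.
- by move=> e; have := old_le _ _ hq2; rewrite -e ltnn.
Qed.

Lemma place_active c' : c' != c -> is_active k (place F c n.+1) c' = is_active k F c'.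
Proof. by move=> /negbTE h; rewrite /is_active column_place h. Qed.

Lemma place_bottom_lt c1 c2 : c1 < c2 ->
  is_active k (place F c n.+1) c1 -> is_active k (place F c n.+1) c2 ->
  bottom (place F c n.+1) c1 < bottom (place F c n.+1) c2.
Proof.
rewrite !bottom_place.
case: (eqVneq c1 c) => [->|n1]; case: (eqVneq c2 c) => [->|n2]; rewrite ?ltnn //.
- by move=> lt _; rewrite place_active // (negbTE (c_last lt)).
- move=> _; rewrite place_active // => /andP[ne _] _.
  by rewrite ltnS (inv_bottom_le inv).
- by rewrite !place_active //; exact: (inv_bottom_lt inv).
Qed.

Lemma place_area_active c' : is_active k (place F c n.+1) c' ->
  area k pi c' = Posz (\sum_(0 <= i < c') free_cells k (place F c n.+1) i).
Proof.
have sum_before m : m <= c -> \sum_(0 <= i < m) free_cells k (place F c n.+1) i =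
                                 \sum_(0 <= i < m) free_cells k F i.
  move=> hm; apply: eq_big_nat => i /andP[_ hi].
  by rewrite free_cells_place_neq // neq_ltn (leq_trans hi hm).
case: (eqVneq c' c) => [-> _|nc]; first by rewrite sum_before // place_area.
rewrite place_active // => act; rewrite sum_before ?(inv_area_active inv) //.
by rewrite leqNgt; apply/negP => /c_last; rewrite act.
Qed.

Lemma filling_inv_place : filling_inv k pi n.+1 (place F c n.+1).
Proof.
split.
- by rewrite size_set_nth (inv_size inv); apply/maxn_idPr.
- exact: place_empty.
- move=> c'; rewrite column_place; case: eqP => [->|_]; last exact: (inv_cap inv).
  by rewrite size_rcons.
- exact: place_entry.
- move=> x /andP[x0]; rewrite leq_eqVlt => /predU1P[->|xn].
    exists c, (size (column F c)).
    by rewrite column_place eqxx size_rcons nth_rcons ltnn eqxx.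
  have [c' [q [hq <-]]] := inv_cover inv (x := x) (ltac:(by rewrite x0)).
  exists c', q; rewrite column_place; case: eqP => [e|//]; subst c'.
  by rewrite size_rcons nth_rcons hq ltnW.
- exact: place_uniq.
- exact: place_bottom_lt.
- exact: place_area_active.
- apply: (@addIr _ (Posz (free_cells k F c))).
  rewrite -PoszD sum_free_cells_place // PoszD -(inv_srank inv) place_free_cells srankS //.
  by rewrite addrAC addrA.
Qed.

End Place.

Section FillStep.

Variables (k : seq nat) (pi : seq letter) (n : nat) (F : tableau).
Hypotheses (pi_dyck : is_dyck k pi) (inv : filling_inv k pi n F) (n_lt : n < size pi).

Let pi_labels : pmap id pi = iota 0 (size k). Proof. by case: pi_dyck. Qed.

Lemma filling_inv_fill_Some c : nth None pi n = Some c ->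
  filling_inv k pi n.+1 (fill_step k F n.+1 (Some c)).
Proof.
move=> letter_n; have c_lt : c < size k by rewrite -(mem_Some pi_labels) -letter_n mem_nth.
have index_c : index (Some c) pi = n by apply: (index_Some_nth pi_labels).
have empty_c : column F c = [::].
  by apply/eqP; rewrite -size_eq0 (inv_empty inv c_lt) index_c.
have empty_after c' : c <= c' -> size (column F c') = 0.
  move=> le; case: (ltnP c' (size k)) => [lt|ge].
    by apply/eqP; rewrite (inv_empty inv lt) -index_c (index_Some_le pi_labels).
  by rewrite /column nth_default ?(inv_size inv).
have -> : fill_step k F n.+1 (Some c) = place F c n.+1.
  rewrite /fill_step /place empty_c; congr set_nth.
  apply: (@find_first _ [::] (fun cl : seq nat => size cl == 0)).
  - by rewrite (inv_size inv).
  - by rewrite -/(column F c) empty_c.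
  move=> j lt; rewrite -/(column F j) -lt0n (inv_started inv (ltn_trans lt c_lt)) -index_c.
  exact: (index_Some_lt pi_labels).
apply: filling_inv_place => //; first by rewrite empty_c.
  by move=> c' /ltnW /empty_after; rewrite /is_active => ->.
by rewrite letter_n empty_c.
Qed.

Lemma filling_inv_fill_None : nth None pi n = None ->
  filling_inv k pi n.+1 (fill_step k F n.+1 None).
Proof.
move=> letter_n; have := largest_activeP (inv_bottom_lt inv); rewrite /fill_step.
case: largest_active => [b [b_lt /[dup] act_b /andP[ne_b room_b] b_max]|none_active].
  apply: (filling_inv_place pi_labels inv) => //.
    move=> c' lt; apply/negP => /[dup] /andP[/(inv_column_lt inv) c'_lt _] /(b_max _ c'_lt).
    by rewrite leqNgt lt.
  by rewrite letter_n eqn0Ngt ne_b.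
(* with no active column the rank is 0, so a W-step would make it negative *)
have := srank_ge0 pi_dyck n_lt; rewrite srankS // letter_n (inv_srank inv).
rewrite big_nat_eq0 // => i /andP[_ /none_active /free_cells_inactive //].
Qed.

End FillStep.

Definition filling (k : seq nat) (s : seq letter) : tableau :=
  foldl (fun F p => fill_step k F p.1 p.2) (nseq (size k) [::]) (zip (iota 1 (size s)) s).

Lemma filling_rcons k s x : filling k (rcons s x) = fill_step k (filling k s) (size s).+1 x.
Proof.
rewrite /filling size_rcons -[(size s).+1]addn1 iotaD /= cats1 zip_rcons ?size_iota //.
by rewrite foldl_rcons addnC.
Qed.

Lemma filling_inv_nil k pi : filling_inv k pi 0 (nseq (size k) [::]).
Proof.
have col0 c : column (nseq (size k) [::]) c = [::] by rewrite /column nth_nseq if_same.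
split=> [|c _|c|c q|x|c q c' q'|c c' _|c|]; rewrite ?col0 //.
- by rewrite size_nseq.
- by case: x => [|x] /andP[].
- by rewrite /is_active col0.
- by rewrite /is_active col0.
rewrite /srank take0 big_nil big_nat_eq0 // => i _.
by rewrite /free_cells col0.
Qed.

Lemma filling_inv_take k pi n : is_dyck k pi -> n <= size pi ->
  filling_inv k pi n (filling k (take n pi)).
Proof.
move=> pi_dyck; elim: n => [_|n IH n_lt]; first by rewrite take0; apply: filling_inv_nil.
rewrite (take_nth None n_lt) filling_rcons size_take n_lt.
have inv := IH (ltnW n_lt).
case letter_n: (nth None pi n) => [c|].
  exact: filling_inv_fill_Some.
exact: filling_inv_fill_None.
Qed.

Lemma first_letter k pi : is_dyck k pi -> 0 < size k -> nth None pi 0 = Some 0.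
Proof.
move=> pi_dyck k_gt0; have [pi_labels _ _] := pi_dyck.
have pi_gt0 : 0 < size pi by move: (mem_Some pi_labels 0); rewrite k_gt0; case: (pi).
case e: (nth None pi 0) => [c|].
  by rewrite (nth_SomeE pi_labels e pi_gt0) take0.
have := srank_ge0 pi_dyck pi_gt0.
by rewrite srankS // e /srank take0 big_nil.
Qed.

Lemma index_Some0 k pi : is_dyck k pi -> 0 < size k -> index (Some 0) pi = 0.
Proof. by move=> pi_dyck /(first_letter pi_dyck); case: pi pi_dyck => //= x s _ ->. Qed.

Lemma eta_filling k pi : is_dyck k pi -> 0 < size k -> eta k pi = filling k pi.
Proof.
move=> pi_dyck k_gt0; have := first_letter pi_dyck k_gt0.
case: pi pi_dyck => [//|x pi] _ /= ->; rewrite /eta /filling /=.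
by rewrite /fill_step find_nseq.
Qed.

Lemma foldl_rcons_prefix (T : Type) (g : seq T -> nat -> T) R0 s :
  let R := foldl (fun R i => rcons R (g R i)) R0 s in
  size R = size R0 + size s /\ take (size R0) R = R0.
Proof.
elim: s R0 => [|i s IH] R0 /=; first by rewrite addn0 take_size.
have [-> prefix] := IH (rcons R0 (g R0 i)); rewrite size_rcons addSnnS in prefix *; split=> //.
by rewrite -(take_takel _ (leqnSn (size R0))) prefix -cats1 take_size_cat.
Qed.

Lemma nth_foldl_rcons (T : Type) (x0 : T) (g : seq T -> nat -> T) R0 m i :
  size R0 <= i < size R0 + m ->
  let R := foldl (fun R i => rcons R (g R i)) R0 (iota (size R0) m) in
  nth x0 R i = g (take i R) i.
Proof.
elim: m R0 => [|m IH] R0 /andP[le lt] /=; first by move: lt; rewrite addn0 ltnNge le.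
case: (eqVneq i (size R0)) => [->|ne]; last first.
  by rewrite -(size_rcons R0 (g R0 (size R0))) IH // size_rcons ltn_neqAle eq_sym ne le addSnnS.
have [_] := foldl_rcons_prefix g (rcons R0 (g R0 (size R0))) (iota (size R0).+1 m).
rewrite size_rcons => prefix.
rewrite -(nth_take _ (ltnSn _)) prefix nth_rcons ltnn eqxx.
by rewrite -(take_takel _ (leqnSn (size R0))) prefix -cats1 take_size_cat.
Qed.

Definition gamma_column (k : seq nat) (F R : tableau) (i : nat) : seq nat :=
  let A := (head 0 (column F i)).-1 in
  let c := find (fun cl => A \in cl) F in
  iota (nth 0 (column R c) (index A (column F c))) (nth 0 k i).+1.

Lemma gammaE k F : gamma k F =
  foldl (fun R i => rcons R (gamma_column k F R i)) [:: iota 0 (nth 0 k 0).+1] (iota 1 (size k).-1).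
Proof. by []. Qed.

Lemma column_gamma0 k F : column (gamma k F) 0 = iota 0 (nth 0 k 0).+1.
Proof.
rewrite /column -(nth_take _ (ltnSn 0)) gammaE.
by have [_ ->] := foldl_rcons_prefix (gamma_column k F) [:: iota 0 (nth 0 k 0).+1] (iota 1 (size k).-1).
Qed.

Lemma column_gamma k F j : 0 < j < size k ->
  column (gamma k F) j = gamma_column k F (take j (gamma k F)) j.
Proof.
move=> /andP[j0 jk]; rewrite /column gammaE.
apply: (@nth_foldl_rcons _ [::] (gamma_column k F) [:: iota 0 (nth 0 k 0).+1] (size k).-1 j).
by rewrite /= j0 add1n prednK // (leq_trans _ jk).
Qed.

Lemma area_first k pi : is_dyck k pi -> area k pi 0 = 0%R.
Proof.
move=> pi_dyck; have [pi_labels _ _] := pi_dyck; rewrite /area.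
case: (posnP (size k)) => [k0|k_gt0].
  by rewrite memNindex ?srank_size // (mem_Some pi_labels) k0.
by rewrite (index_Some0 pi_dyck k_gt0) /srank take0 big_nil.
Qed.

Section EtaGamma.

Variables (k : seq nat) (pi : seq letter).
Hypotheses (pi_dyck : is_dyck k pi) (k_gt0 : 0 < size k).

Let pi_labels : pmap id pi = iota 0 (size k). Proof. by case: pi_dyck. Qed.

Lemma filling_inv_eta : filling_inv k pi (size pi) (eta k pi).
Proof. by rewrite eta_filling // -{3}(take_size pi); apply: filling_inv_take. Qed.

Lemma index_Some_gt0 j : 0 < j < size k -> 0 < index (Some j) pi.
Proof.
move=> /andP[j0 jk].
by rewrite -(index_Some0 pi_dyck k_gt0) (index_Some_lt pi_labels).
Qed.

Lemma index_Some_lt_size j : j < size k -> index (Some j) pi < size pi.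
Proof. by move=> jk; rewrite index_mem (mem_Some pi_labels). Qed.

Lemma head_eta j : j < size k -> (head 0 (column (eta k pi) j)).-1 = index (Some j) pi.
Proof.
move=> jk; have ne : 0 < size (column (eta k pi) j).
  by rewrite (inv_started filling_inv_eta jk) index_Some_lt_size.
have [_ _ head_eq _] := inv_entry filling_inv_eta ne.
by case: (column _ j) head_eq ne => // y s /= ->.
Qed.

Lemma entry_eta_index j : 0 < j < size k ->
  exists c q, q < size (column (eta k pi) c) /\ nth 0 (column (eta k pi) c) q = index (Some j) pi.
Proof.
move=> /andP[j0 jk]; apply: (inv_cover filling_inv_eta).
by rewrite index_Some_gt0 ?j0 // ltnW // index_Some_lt_size.
Qed.

Lemma column_gamma_eta_entry j c q : 0 < j < size k ->
  q < size (column (eta k pi) c) -> nth 0 (column (eta k pi) c) q = index (Some j) pi ->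
  column (gamma k (eta k pi)) j = iota (nth 0 (column (gamma k (eta k pi)) c) q) (nth 0 k j).+1.
Proof.
move=> /[dup] /andP[_ jk] j_range hq hx.
have [/andP[_ _] c_before _ _] := inv_entry filling_inv_eta hq.
have cj : c < j.
  rewrite ltnNge; apply/negP => le; move: c_before; rewrite hx ltnNge.
  by rewrite (index_Some_le pi_labels le) // (inv_column_lt filling_inv_eta (leq_ltn_trans _ hq)).
have [find_c index_q] := inv_find_column filling_inv_eta hq.
by rewrite column_gamma // /gamma_column (head_eta jk) -hx find_c index_q /column nth_take.
Qed.

Lemma column_gamma_eta i : i < size k ->
  column (gamma k (eta k pi)) i = iota (depth k pi i) (nth 0 k i).+1.
Proof.
case: (posnP i) => [-> _|i0 ik]; first by rewrite /depth !column_gamma0.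
have i_range : 0 < i < size k by rewrite i0.
have [c [q [hq hx]]] := entry_eta_index i_range.
by rewrite /depth (column_gamma_eta_entry i_range hq hx).
Qed.

End EtaGamma.

Theorem lemma4p13 (k : seq nat) (pi : seq letter) :
  all (fun x => 0 < x) k ->
  is_dyck k pi ->
  let F := eta k pi in
  let t := fun j => head 0 (column F j) in
  area k pi 0 = 0%R /\ depth k pi 0 = 0 /\
  forall j, 1 <= j < size k ->
    (exists i m, [/\ i < size k, 0 < m, m <= size (column F i)
                   & nth 0 (column F i) m.-1 = (t j).-1]) /\
    (forall i m, i < size k -> 0 < m -> m <= size (column F i) ->
       nth 0 (column F i) m.-1 = (t j).-1 ->
       area k pi j = (area k pi i + (nth 0 k i)%:Z - m%:Z + 1)%R /\
       depth k pi j = depth k pi i + m - 1).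
Proof.
move=> _ pi_dyck F t; split; first exact: area_first.
split=> [|j j_range]; first by rewrite /depth column_gamma0.
have k_gt0 : 0 < size k by case/andP: j_range => _; apply: leq_trans.
have [_ jk] := andP j_range; rewrite /t (head_eta pi_dyck k_gt0 jk); split.
  have [c [q [hq hx]]] := entry_eta_index pi_dyck k_gt0 j_range.
  exists c, q.+1; split=> //.
  exact: inv_column_lt (filling_inv_eta pi_dyck k_gt0) _ (leq_ltn_trans _ hq).
move=> i m ik m0 hm hx; have hq : m.-1 < size (column F i) by rewrite prednK.
have [_ _ _ area_eq] := inv_entry (filling_inv_eta pi_dyck k_gt0) hq.
rewrite hx -/(area k pi j) in area_eq; split.
  (* the statement's [nth 0 k i] defaults to the zero of the nat semiring *)
  move: area_eq; rewrite -[Posz (nth 0%R k i)]/(Posz (nth 0%N k i)); lia.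
rewrite /depth (column_gamma_eta_entry pi_dyck k_gt0 j_range hq hx) /= -/(depth k pi i).
rewrite (column_gamma_eta pi_dyck k_gt0 ik) nth_iota; first lia.
by have := inv_cap (filling_inv_eta pi_dyck k_gt0) i; rewrite -/F; lia.
Qed.
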